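(* For every $M$ with $0\le M<\frac12$, every deterministic semi-online algorithm with migration factor $M$ for scheduling on two hierarchical machines with known optimal makespan (bin stretching) has competitive ratio at least $\frac32$.
   Context: Model (two hierarchical machines with migration, bin stretching). Jobs $1,2,\dots,n$ arrive one by one ($n$ unknown in advance). Job $j$ has a size $p_j>0$ and a grade of service (GoS) $g_j\in\{1,2\}$; a job of GoS $1$ may only be processed on machine $m_1$, a job of GoS $2$ may be processed on $m_1$ or on $m_2$. The load of a machine is the total size of its jobs, the makespan is the maximum load. When job $j$ arrives, the algorithm must assign it, and may migrate previously arrived jobs (respecting GoS) of total size at most $M\cdot p_j$ (migration factor $M$). Bin stretching: the optimal offline makespan of the complete input is known in advance to the algorithm (scaled to $1$). The competitive ratio is the supremum over inputs of (algorithm's makespan)/(optimal makespan). *)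

From HB Require Import structures.
From mathcomp Require Import all_boot all_order all_algebra.
From mathcomp Require Import reals.
Set Implicit Arguments. Unset Strict Implicit. Unset Printing Implicit Defensive.
Import Order.TTheory GRing.Theory Num.Theory.
Local Open Scope ring_scope.

(* Grade of service of a job: GoS 1 (only m1) or GoS 2 (m1 or m2). *)
Inductive gos := GoS1 | GoS2.
Inductive machine := m1 | m2.

Definition machine_eqb (a b : machine) : bool :=
  match a, b with m1, m1 | m2, m2 => true | _, _ => false end.

Section Sched.
Variable R : realType.

Record job := Job { jsize : R ; jgos : gos }.

Definition dummy_job : job := Job 0 GoS1.

Definition jnth (s : seq job) (i : nat) : job := nth dummy_job s i.

Definition sizes_pos (s : seq job) : Prop :=
  forall i, (i < size s)%N -> 0 < jsize (jnth s i).

(* An assignment maps the index (position in arrival order, from 0) of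
   each job to a machine. It respects GoS on the jobs of s. *)
Definition respects_gos (s : seq job) (a : nat -> machine) : Prop :=
  forall i, (i < size s)%N -> jgos (jnth s i) = GoS1 -> a i = m1.

Definition load (s : seq job) (a : nat -> machine) (m : machine) : R :=
  \sum_(i < size s) (if machine_eqb (a i) m then jsize (jnth s i) else 0).

Definition makespan (s : seq job) (a : nat -> machine) : R :=
  Num.max (load s a m1) (load s a m2).

Definition migrated (s : seq job) (a a' : nat -> machine) : R :=
  \sum_(i < size s) (if machine_eqb (a i) (a' i) then 0 else jsize (jnth s i)).

Definition opt_is_one (s : seq job) : Prop :=
  (exists a, respects_gos s a /\ makespan s a <= 1) /\
  (forall a, respects_gos s a -> 1 <= makespan s a).

(* A deterministic semi-online algorithm is a function of the history
   (the sequence of jobs arrived so far, the last one being the new job)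
   returning the assignment of all jobs arrived so far. *)
Definition algorithm := seq job -> (nat -> machine).

Definition is_migration_algorithm (M : R) (A : algorithm) : Prop :=
  forall (s : seq job) (j : job), sizes_pos (rcons s j) ->
    respects_gos (rcons s j) (A (rcons s j)) /\
    migrated s (A s) (A (rcons s j)) <= M * jsize j.

End Sched.

(* Since M < 1/2, no job of size at least 1/2 can be migrated when a job of
   size at most 1 arrives, so every placement below is final. The adversary
   opens with a job of size 1/2 and GoS 2. If it goes to m1, a second such job
   and then a GoS 1 job of size 1 leave m1 with load at least 3/2, whereas the
   optimum puts both halves on m2. If it goes to m2, a GoS 2 job of size 1
   follows: on m2 it makes load 3/2; on m1 a GoS 1 job of size 1/2 follows and
   m1 reaches 3/2. The optimum is 1 in every case. *)
From mathcomp Require Import all_boot all_order all_algebra.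
From mathcomp Require Import reals.
From mathcomp Require Import lra.
Set Implicit Arguments. Unset Strict Implicit. Unset Printing Implicit Defensive.
Import Order.TTheory GRing.Theory Num.Theory.
Local Open Scope ring_scope.

Section Scheduling.
Variable R : realType.
Implicit Types (s : seq (job R)) (j : job R) (a : nat -> machine).

Lemma machine_eqbP (x y : machine) : reflect (x = y) (machine_eqb x y).
Proof. by case: x; case: y; constructor. Qed.

Lemma sizes_pos_all s : all (fun j => 0 < jsize j) s -> sizes_pos s.
Proof. exact: all_nthP. Qed.

Lemma sizes_pos_rcons s j : sizes_pos (rcons s j) -> sizes_pos s.
Proof.
move=> pos_sj i lt_i_s; have := pos_sj i.
by rewrite /jnth nth_rcons lt_i_s size_rcons ltnS ltnW //; apply.
Qed.

Lemma jsize_ge0 s (k : 'I_(size s)) : sizes_pos s -> 0 <= jsize (jnth s k).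
Proof. by move=> pos_s; apply/ltW/pos_s. Qed.

Lemma jsize_le_migrated s a a' i : sizes_pos s -> (i < size s)%N ->
  a i <> a' i -> jsize (jnth s i) <= migrated s a a'.
Proof.
move=> pos_s lt_i_s neq_i; rewrite /migrated (bigD1 (Ordinal lt_i_s)) //=.
have /negbTE -> : ~~ machine_eqb (a i) (a' i) by apply/machine_eqbP.
rewrite lerDl sumr_ge0 // => k _; case: machine_eqb => //.
exact: jsize_ge0.
Qed.

Lemma load_ge_jsize s a i : sizes_pos s -> (i < size s)%N ->
  jsize (jnth s i) <= load s a (a i).
Proof.
move=> pos_s lt_i_s; rewrite /load (bigD1 (Ordinal lt_i_s)) //=.
have -> : machine_eqb (a i) (a i) by apply/machine_eqbP.
rewrite lerDl sumr_ge0 // => k _; case: machine_eqb => //.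
exact: jsize_ge0.
Qed.

Lemma load_ge_pair s a m i k : sizes_pos s -> (i < k < size s)%N ->
  a i = m -> a k = m -> jsize (jnth s i) + jsize (jnth s k) <= load s a m.
Proof.
move=> pos_s /andP[lt_ik lt_k_s] ai_m ak_m.
have lt_i_s := ltn_trans lt_ik lt_k_s.
rewrite /load (bigD1 (Ordinal lt_i_s)) // (bigD1 (Ordinal lt_k_s)) /=; last first.
  by rewrite -val_eqE /= gtn_eqF.
have -> : machine_eqb (a i) m by apply/machine_eqbP.
have -> : machine_eqb (a k) m by apply/machine_eqbP.
rewrite addrA lerDl sumr_ge0 // => l _; case: machine_eqb => //.
exact: jsize_ge0.
Qed.

Lemma load_le_makespan s a m : load s a m <= makespan s a.
Proof. by rewrite /makespan le_max; case: m; rewrite lexx ?orbT. Qed.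

Lemma makespan_ge_pair s a m i k : sizes_pos s -> (i < k < size s)%N ->
  a i = m -> a k = m -> jsize (jnth s i) + jsize (jnth s k) <= makespan s a.
Proof.
by move=> pos_s lt_iks ai ak; apply: le_trans (load_le_makespan _ _ m);
  apply: load_ge_pair.
Qed.

Lemma opt_is_one_witness s a i : sizes_pos s -> (i < size s)%N ->
  1 <= jsize (jnth s i) -> respects_gos s a -> makespan s a <= 1 -> opt_is_one s.
Proof.
move=> pos_s lt_i_s big_i gos_a mk_a; split; first by exists a.
move=> b _; apply: (le_trans big_i).
exact: le_trans (load_ge_jsize b pos_s lt_i_s) (load_le_makespan _ _ _).
Qed.

Section Migration.
Variables (M : R) (A : algorithm R).
Hypothesis migA : is_migration_algorithm M A.

Lemma large_job_not_migrated s j i : sizes_pos (rcons s j) -> (i < size s)%N ->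
  M * jsize j < jsize (jnth s i) -> A (rcons s j) i = A s i.
Proof.
move=> pos_sj lt_i_s small_j; have [_ mig] := migA pos_sj.
case: (machine_eqbP (A s i) (A (rcons s j) i)) => [//|moved].
have := le_trans (jsize_le_migrated (sizes_pos_rcons pos_sj) lt_i_s moved) mig.
by rewrite leNgt small_j.
Qed.

Lemma gos1_arrival_on_m1 s j : sizes_pos (rcons s j) -> jgos j = GoS1 ->
  A (rcons s j) (size s) = m1.
Proof.
move=> pos_sj gos_j; have [gosA _] := migA pos_sj.
by apply: gosA; rewrite ?size_rcons // /jnth nth_rcons ltnn eqxx.
Qed.

End Migration.

Definition half_job g : job R := Job (1 / 2) g.
Definition unit_job g : job R := Job 1 g.

Lemma opt_half2_half2_unit1 : opt_is_one [:: half_job GoS2; half_job GoS2; unit_job GoS1].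
Proof.
apply: (@opt_is_one_witness _ (fun i => if i == 2 then m1 else m2) 2) => //.
- by apply: sizes_pos_all; rewrite /=; lra.
- by move=> [|[|[|i]]].
- by rewrite /makespan /load /= !big_ord_recr !big_ord0 /= ge_max; lra.
Qed.

Lemma opt_half2_unit2 : opt_is_one [:: half_job GoS2; unit_job GoS2].
Proof.
apply: (@opt_is_one_witness _ (fun i => if i == 0 then m1 else m2) 1) => //.
- by apply: sizes_pos_all; rewrite /=; lra.
- by move=> [|[|i]].
- by rewrite /makespan /load /= !big_ord_recr !big_ord0 /= ge_max; lra.
Qed.

Lemma opt_half2_unit2_half1 :
  opt_is_one [:: half_job GoS2; unit_job GoS2; half_job GoS1].
Proof.
apply: (@opt_is_one_witness _ (fun i => if i == 1 then m2 else m1) 1) => //.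
- by apply: sizes_pos_all; rewrite /=; lra.
- by move=> [|[|[|i]]].
- by rewrite /makespan /load /= !big_ord_recr !big_ord0 /= ge_max; lra.
Qed.

Definition forces_ratio (A : algorithm R) (r : R) : Prop :=
  exists s, sizes_pos s /\ opt_is_one s /\ r <= makespan s (A s).

Section Adversary.
Variables (M : R) (A : algorithm R).
Hypothesis migA : is_migration_algorithm M A.

Lemma first_on_m1_forces : M < 1 / 2 ->
  A [:: half_job GoS2] 0 = m1 -> forces_ratio A (3 / 2).
Proof.
move=> lt_M_half first_m1.
have pos2 : sizes_pos (rcons [:: half_job GoS2] (half_job GoS2)).
  by apply: sizes_pos_all; rewrite /=; lra.
have pos3 : sizes_pos (rcons [:: half_job GoS2; half_job GoS2] (unit_job GoS1)).
  by apply: sizes_pos_all; rewrite /=; lra.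
have keep2 : A [:: half_job GoS2; half_job GoS2] 0 = m1.
  by rewrite (large_job_not_migrated migA pos2) //= /jnth /=; lra.
have keep3 : A [:: half_job GoS2; half_job GoS2; unit_job GoS1] 0 = m1.
  by rewrite (large_job_not_migrated migA pos3) //= /jnth /=; lra.
have last3 := gos1_arrival_on_m1 migA pos3 erefl.
exists (rcons [:: half_job GoS2; half_job GoS2] (unit_job GoS1)).
split=> //; split; first exact: opt_half2_half2_unit1.
apply: le_trans (makespan_ge_pair pos3 _ keep3 last3) => //.
by rewrite /jnth /=; lra.
Qed.

Lemma first_on_m2_forces : M < 1 / 2 ->
  A [:: half_job GoS2] 0 = m2 -> forces_ratio A (3 / 2).
Proof.
move=> lt_M_half first_m2.
have pos2 : sizes_pos (rcons [:: half_job GoS2] (unit_job GoS2)).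
  by apply: sizes_pos_all; rewrite /=; lra.
have keep2 : A [:: half_job GoS2; unit_job GoS2] 0 = m2.
  by rewrite (large_job_not_migrated migA pos2) //= /jnth /=; lra.
case second: (A [:: half_job GoS2; unit_job GoS2] 1).
- have pos3 : sizes_pos (rcons [:: half_job GoS2; unit_job GoS2] (half_job GoS1)).
    by apply: sizes_pos_all; rewrite /=; lra.
  have keep3 : A [:: half_job GoS2; unit_job GoS2; half_job GoS1] 1 = m1.
    by rewrite (large_job_not_migrated migA pos3) //= /jnth /=; lra.
  have last3 := gos1_arrival_on_m1 migA pos3 erefl.
  exists (rcons [:: half_job GoS2; unit_job GoS2] (half_job GoS1)).
  split=> //; split; first exact: opt_half2_unit2_half1.
  apply: le_trans (makespan_ge_pair pos3 _ keep3 last3) => //.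
  by rewrite /jnth /=; lra.
- exists [:: half_job GoS2; unit_job GoS2]; split=> //; split.
    exact: opt_half2_unit2.
  apply: le_trans (makespan_ge_pair pos2 _ keep2 second) => //.
  by rewrite /jnth /=; lra.
Qed.

Lemma migration_forces_three_halves : M < 1 / 2 -> forces_ratio A (3 / 2).
Proof.
move=> lt_M_half; case first: (A [:: half_job GoS2] 0).
  exact: first_on_m1_forces.
exact: first_on_m2_forces.
Qed.

End Adversary.

End Scheduling.

Theorem mainTheorem16 (R : realType) (M : R) :
  0 <= M -> M < 1 / 2 ->
  forall A : algorithm R, is_migration_algorithm M A ->
  forall c : R, c < 3 / 2 ->
  exists s : seq (job R),
    sizes_pos s /\ opt_is_one s /\ c < makespan s (A s).
Proof.
move=> _ lt_M_half A migA c lt_c.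
have [s [pos_s [opt_s ge_s]]] := migration_forces_three_halves migA lt_M_half.
by exists s; split=> //; split=> //; apply: lt_le_trans ge_s.
Qed.
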